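(* Let $(\mathfrak{g},[\cdot,\ldots,\cdot],\varepsilon,\alpha)$ be an $n$-Hom-Lie color algebra with $n\geq3$ and let $\mathcal{N}$ be a bijective Nijenhuis operator on it. Let $a\in\mathfrak{g}_0$ with $\alpha(a)=a$ and $\mathcal{N}(a)\in Z(\mathfrak{g})$. Then $\mathcal{N}$ is a Nijenhuis operator on the $(n-1)$-Hom-Lie color algebra $(\mathfrak{g},\{\cdot,\ldots,\cdot\},\varepsilon,\alpha)$, where $\{x_1,\ldots,x_{n-1}\}=[a,x_1,\ldots,x_{n-1}]$.
   Context: $\mathbb{K}$ is a field of characteristic zero and $\Gamma$ an abelian group; $\mathfrak{g}_0$ is the degree-$0$ component. A bicharacter is a map $\varepsilon:\Gamma\times\Gamma\to\mathbb{K}\setminus\{0\}$ with $\varepsilon(a,b)\varepsilon(b,a)=1$, $\varepsilon(a,b+c)=\varepsilon(a,b)\varepsilon(a,c)$, $\varepsilon(a+b,c)=\varepsilon(a,c)\varepsilon(b,c)$. For homogeneous $x,y$, $\varepsilon(x,y)=\varepsilon(|x|,|y|)$ and $\varepsilon(x,y_1+\dots+y_k)=\varepsilon(|x|,|y_1|+\dots+|y_k|)$ ($=1$ for an empty sum). An $m$-Hom-Lie color algebra $(\mathfrak{g},[\cdot,\ldots,\cdot],\varepsilon,\alpha)$ is a $\Gamma$-graded vector space with an $m$-linear bracket of degree zero, a bicharacter $\varepsilon$ and a degree-zero linear map $\alpha$ such that for homogeneous elements: (i) $[x_1,\ldots,x_i,x_{i+1},\ldots,x_m]=-\varepsilon(x_i,x_{i+1})[x_1,\ldots,x_{i+1},x_i,\ldots,x_m]$;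 (ii) $[\alpha(x_1),\ldots,\alpha(x_{m-1}),[y_1,\ldots,y_m]]=\sum_{i=1}^m\varepsilon(x_1+\dots+x_{m-1},y_1+\dots+y_{i-1})[\alpha(y_1),\ldots,\alpha(y_{i-1}),[x_1,\ldots,x_{m-1},y_i],\alpha(y_{i+1}),\ldots,\alpha(y_m)]$. The center is $Z(\mathfrak{g})=\{x:[x,y_1,\ldots,y_{m-1}]=0\ \forall y_i\}$. For an $m$-ary bracket and a degree-zero linear $\mathcal{N}$, set $[\cdot]^0_{\mathcal{N}}=[\cdot]$ and $[x_1,\ldots,x_m]^j_{\mathcal{N}}=\sum_{i_1<\dots<i_j}[x_1,\ldots,\mathcal{N}x_{i_1},\ldots,\mathcal{N}x_{i_j},\ldots,x_m]-\mathcal{N}([x_1,\ldots,x_m]^{j-1}_{\mathcal{N}})$ for $1\le j\le m-1$ ($\mathcal{N}$ applied exactly at positions $i_1,\ldots,i_j$). $\mathcal{N}$ is a Nijenhuis operator on the $m$-ary algebra if $\mathcal{N}\circ\alpha=\alpha\circ\mathcal{N}$ and $[\mathcal{N}x_1,\ldots,\mathcal{N}x_m]=\mathcal{N}([x_1,\ldots,x_m]^{m-1}_{\mathcal{N}})$. *)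

From HB Require Import structures.
From mathcomp Require Import all_boot all_order all_algebra.
Set Implicit Arguments. Unset Strict Implicit. Unset Printing Implicit Defensive.
Import Order.TTheory GRing.Theory Num.Theory.
Local Open Scope ring_scope.

Section Defs.
Variables (K : fieldType) (Gamma : zmodType) (g : lmodType K).

Definition char_zero : Prop := [pchar K] =i pred0.

Definition bicharacter (eps : Gamma -> Gamma -> K) : Prop :=
  [/\ forall a b, eps a b != 0,
      forall a b, eps a b * eps b a = 1,
      forall a b c, eps a (b + c) = eps a b * eps a c &
      forall a b c, eps (a + b) c = eps a c * eps b c].

Definition grading (gr : Gamma -> pred g) : Prop :=
  [/\
      forall d, 0 \in gr d,
      forall d (k : K) x y, x \in gr d -> y \in gr d -> k *: x + y \in gr d,
      forall x : g, exists s : seq (Gamma * g),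
        [/\ uniq (map fst s), all (fun p => p.2 \in gr p.1) s &
            x = \sum_(p <- s) p.2] &
      forall s : seq (Gamma * g),
        uniq (map fst s) -> all (fun p => p.2 \in gr p.1) s ->
        \sum_(p <- s) p.2 = 0 -> all (fun p => p.2 == 0) s].

Definition deg0_linear (gr : Gamma -> pred g) (f : g -> g) : Prop :=
  linear f /\ forall d x, x \in gr d -> f x \in gr d.

Definition fset_at m (x : {ffun 'I_m -> g}) (i : 'I_m) (y : g) : {ffun 'I_m -> g} :=
  [ffun j => if j == i then y else x j].

Definition cons_ff m (z : g) (y : {ffun 'I_m.-1 -> g}) : {ffun 'I_m -> g} :=
  [ffun j : 'I_m => if val j == 0%N then z
                   else oapp y 0 (insub (val j).-1 : option 'I_m.-1)].

Definition snoc_ff m (x : {ffun 'I_m.-1 -> g}) (z : g) : {ffun 'I_m -> g} :=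
  [ffun j : 'I_m => if (val j < m.-1)%N
                   then oapp x 0 (insub (val j) : option 'I_m.-1) else z].

Definition HomLieColor (eps : Gamma -> Gamma -> K) (gr : Gamma -> pred g)
    (alpha : g -> g) m (br : {ffun 'I_m -> g} -> g) : Prop :=
  bicharacter eps /\
  [/\ deg0_linear gr alpha,
      forall (x : {ffun 'I_m -> g}) (i : 'I_m), linear (fun y => br (fset_at x i y)),
      forall (x : {ffun 'I_m -> g}) (d : 'I_m -> Gamma),
        (forall j, x j \in gr (d j)) -> br x \in gr (\sum_j d j),
      forall (x : {ffun 'I_m -> g}) (d : 'I_m -> Gamma) (i i' : 'I_m),
        (forall j, x j \in gr (d j)) -> val i' = (val i).+1 ->
        br x = - (eps (d i) (d i') *: br [ffun j => if j == i then x i' else if j == i' then x i else x j]) &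
      forall (x : {ffun 'I_m.-1 -> g}) (dx : 'I_m.-1 -> Gamma)
             (y : {ffun 'I_m -> g}) (dy : 'I_m -> Gamma),
        (forall j, x j \in gr (dx j)) -> (forall j, y j \in gr (dy j)) ->
        br (snoc_ff [ffun j => alpha (x j)] (br y)) =
        \sum_(i < m) eps (\sum_j dx j) (\sum_(k < m | (k < i)%N) dy k) *:
          br [ffun k => if k == i then br (snoc_ff x (y i)) else alpha (y k)]].

Definition in_center m (br : {ffun 'I_m -> g} -> g) (z : g) : Prop :=
  forall y : {ffun 'I_m.-1 -> g}, br (cons_ff z y) = 0.

Fixpoint br_N m (br : {ffun 'I_m -> g} -> g) (N : g -> g) (j : nat)
    (x : {ffun 'I_m -> g}) : g :=
  match j with
  | 0%N => br x
  | j'.+1 => \sum_(S : {set 'I_m} | #|S| == j'.+1)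
               br [ffun k => if k \in S then N (x k) else x k]
             - N (br_N br N j' x)
  end.

Definition Nijenhuis (gr : Gamma -> pred g) (alpha : g -> g) m
    (br : {ffun 'I_m -> g} -> g) (N : g -> g) : Prop :=
  [/\ deg0_linear gr N,
      forall x, N (alpha x) = alpha (N x) &
      forall x : {ffun 'I_m -> g},
        br [ffun k => N (x k)] = N (br_N br N m.-1 x)].

Definition induced_br m (br : {ffun 'I_m -> g} -> g) (a : g)
    (x : {ffun 'I_m.-1 -> g}) : g := br (cons_ff a x).

End Defs.

From HB Require Import structures.
From mathcomp Require Import all_boot all_order all_algebra zify.
Import Order.TTheory GRing.Theory Num.Theory.
Set Implicit Arguments. Unset Strict Implicit. Unset Printing Implicit Defensive.
Local Open Scope ring_scope.

(** With [a] of degree zero and fixed by [alpha], every axiom of the bracket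
  [{x} = [a, x]] is the corresponding axiom of [[.]] at the tuple [(a, x)].  In the
  Hom-Nambu identity this produces one extra term, [[[a, x, a], alpha y]], which
  vanishes by colour skew-symmetry since [a] is a repeated argument of degree zero
  and [2 != 0].  For the Nijenhuis condition, centrality of [N a] kills every term
  of [[a, x]^j_N] in which [N] hits [a], so [[a, x]^j_N = {x}^j_N]; the n-ary
  Nijenhuis identity at [(a, x)] then reads [0 = N {x}^(n-1)_N], and injectivity
  of [N] turns [{x}^(n-1)_N = 0] into the (n-1)-ary Nijenhuis identity. *)

Definition swap_ff (T : Type) m (x : 'I_m -> T) (i i' : 'I_m) : {ffun 'I_m -> T} :=
  [ffun k => if k == i then x i' else if k == i' then x i else x k].

Lemma swap_ff_l (T : Type) m (x : 'I_m -> T) i i' : swap_ff x i i' i = x i'.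
Proof. by rewrite ffunE eqxx. Qed.

Lemma swap_ff_id (T : Type) m (x : 'I_m -> T) i i' k :
  k != i -> k != i' -> swap_ff x i i' k = x k.
Proof. by rewrite ffunE => /negbTE-> /negbTE->. Qed.

Lemma swap_ff_same (T : Type) m (x : {ffun 'I_m -> T}) i i' :
  x i = x i' -> swap_ff x i i' = x.
Proof.
move=> xii'; apply/ffunP=> k; rewrite ffunE.
by case: eqP => [->|_] //; case: eqP => [->|].
Qed.

Section Tuples.
Variables (K : fieldType) (g : lmodType K) (m : nat).
Implicit Types (z : g) (x : {ffun 'I_m -> g}).

Lemma cons_ff0 z x : cons_ff (m := m.+1) z x ord0 = z.
Proof. by rewrite ffunE. Qed.

Lemma cons_ff_lift z x k : cons_ff (m := m.+1) z x (lift ord0 k) = x k.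
Proof. by rewrite ffunE /= add0n valK. Qed.

Lemma snoc_ff_max x z : snoc_ff (m := m.+1) x z ord_max = z.
Proof. by rewrite ffunE /= ltnn. Qed.

Lemma snoc_ff_lift x z k : snoc_ff (m := m.+1) x z (lift ord_max k) = x k.
Proof.
rewrite ffunE /=; have -> : bump m k = k by rewrite /bump leqNgt ltn_ord.
by rewrite ltn_ord valK.
Qed.

Lemma cons_ffP (u : {ffun 'I_m.+1 -> g}) z x :
  u ord0 = z -> (forall k, u (lift ord0 k) = x k) -> u = cons_ff (m := m.+1) z x.
Proof.
move=> u0 uS; apply/ffunP=> k; case: (unliftP ord0 k) => [k'|] ->.
  by rewrite cons_ff_lift.
by rewrite cons_ff0.
Qed.

Lemma map_cons_ff (f : g -> g) z x :
  [ffun k => f (cons_ff (m := m.+1) z x k)] =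
  cons_ff (m := m.+1) (f z) [ffun k => f (x k)].
Proof. by apply: cons_ffP => [|k]; rewrite ffunE ?cons_ff0 // cons_ff_lift ffunE. Qed.

Lemma fset_at_cons_ff z x i y :
  fset_at (cons_ff (m := m.+1) z x) (lift ord0 i) y =
  cons_ff (m := m.+1) z (fset_at x i y).
Proof.
apply: cons_ffP => [|k]; rewrite [LHS]ffunE.
  by rewrite (negbTE (neq_lift _ _)) cons_ff0.
by rewrite (inj_eq lift_inj) cons_ff_lift ffunE.
Qed.

Lemma swap_ff_cons_ff z x i i' :
  swap_ff (cons_ff (m := m.+1) z x) (lift ord0 i) (lift ord0 i') =
  cons_ff (m := m.+1) z (swap_ff x i i').
Proof.
apply: cons_ffP => [|k]; rewrite ffunE.
  by rewrite !(negbTE (neq_lift _ _)) cons_ff0.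
by rewrite !(inj_eq lift_inj) !cons_ff_lift ffunE.
Qed.

End Tuples.

Lemma snoc_cons_ff (K : fieldType) (g : lmodType K) m (z z' : g)
    (x : {ffun 'I_m -> g}) :
  snoc_ff (m := m.+2) (cons_ff (m := m.+1) z x) z' =
  cons_ff (m := m.+2) z (snoc_ff (m := m.+1) x z').
Proof.
apply: cons_ffP => [|k].
  have -> : ord0 = lift ord_max ord0 :> 'I_m.+2 by apply: ord_inj.
  by rewrite snoc_ff_lift cons_ff0.
case: (unliftP ord_max k) => [k'|] ->; last first.
  have -> : lift ord0 ord_max = ord_max :> 'I_m.+2 by apply: ord_inj.
  by rewrite !snoc_ff_max.
have -> : lift ord0 (lift ord_max k') = lift ord_max (lift ord0 k') :> 'I_m.+2.
  by apply: val_inj; rewrite /= /bump /=; have := ltn_ord k'; lia.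
by rewrite !snoc_ff_lift cons_ff_lift.
Qed.

Lemma lift0_notin_imset m (S : {set 'I_m}) :
  ord0 \notin [set lift ord0 k | k in S].
Proof. by apply/imsetP => -[k _ /eqP]; rewrite (negbTE (neq_lift _ _)). Qed.

Lemma preimset_lift0_imset m (S : {set 'I_m}) :
  lift ord0 @^-1: [set lift ord0 k | k in S] = S.
Proof. by apply/setP => k; rewrite inE mem_imset //; apply: lift_inj. Qed.

Section Degrees.
Variables (K : fieldType) (Gamma : zmodType) (g : lmodType K) (gr : Gamma -> pred g).

Definition dcons m (e : Gamma) (d : 'I_m -> Gamma) (k : 'I_m.+1) : Gamma :=
  if unlift ord0 k is Some k' then d k' else e.

Definition dsnoc m (d : 'I_m -> Gamma) (e : Gamma) (k : 'I_m.+1) : Gamma :=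
  if unlift ord_max k is Some k' then d k' else e.

Lemma cons_ff_in_gr m (z : g) e (x : {ffun 'I_m -> g}) d :
  z \in gr e -> (forall k, x k \in gr (d k)) ->
  forall k, cons_ff (m := m.+1) z x k \in gr (dcons e d k).
Proof.
move=> ze xd k; rewrite /dcons; case: (unliftP ord0 k) => [k'|] ->.
  by rewrite cons_ff_lift.
by rewrite cons_ff0.
Qed.

Lemma snoc_ff_in_gr m (z : g) e (x : {ffun 'I_m -> g}) d :
  z \in gr e -> (forall k, x k \in gr (d k)) ->
  forall k, snoc_ff (m := m.+1) x z k \in gr (dsnoc d e k).
Proof.
move=> ze xd k; rewrite /dsnoc; case: (unliftP ord_max k) => [k'|] ->.
  by rewrite snoc_ff_lift.
by rewrite snoc_ff_max.
Qed.

Lemma big_dcons0 m (d : 'I_m -> Gamma) (P : pred 'I_m.+1) :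
  \sum_(k < m.+1 | P k) dcons 0 d k = \sum_(k < m | P (lift ord0 k)) d k.
Proof.
rewrite big_mkcond big_ord_recl /= /dcons unlift_none if_same add0r [RHS]big_mkcond.
by apply: eq_bigr => k _; rewrite liftK.
Qed.

End Degrees.

Lemma bicharacter_eps00 (K : fieldType) (Gamma : zmodType)
    (eps : Gamma -> Gamma -> K) :
  bicharacter eps -> eps 0 0 = 1.
Proof.
case=> eps_neq0 _ eps_addr _; apply: (mulfI (eps_neq0 0 0)).
by rewrite mulr1 -eps_addr addr0.
Qed.

Lemma linear_fun0 (K : fieldType) (U V : lmodType K) (f : U -> V) :
  linear f -> f 0 = 0.
Proof. by move=> f_lin; have := f_lin (-1) 0 0; rewrite scaler0 add0r scaleN1r addNr. Qed.

Section HomLieColorTheory.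
Variables (K : fieldType) (Gamma : zmodType) (g : lmodType K).
Variables (eps : Gamma -> Gamma -> K) (gr : Gamma -> pred g) (alpha : g -> g).
Variables (m : nat) (br : {ffun 'I_m -> g} -> g).
Hypothesis hlie : HomLieColor eps gr alpha br.

Lemma HomLieColor_skew (x : {ffun 'I_m -> g}) d (i i' : 'I_m) :
  (forall k, x k \in gr (d k)) -> val i' = (val i).+1 ->
  br x = - (eps (d i) (d i') *: br (swap_ff x i i')).
Proof. by case: hlie => _ [_ _ _ skew _]; apply: skew. Qed.

Lemma HomLieColor_eq0 (x : {ffun 'I_m -> g}) i : x i = 0 -> br x = 0.
Proof.
case: hlie => _ [_ br_lin _ _ _] xi0.
have -> : x = fset_at x i 0 by apply/ffunP => k; rewrite ffunE; case: eqP => // ->.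
exact: linear_fun0 (br_lin x i).
Qed.

Lemma HomLieColor_eq0_repeat (x : {ffun 'I_m -> g}) d (i j : 'I_m) :
  char_zero K -> (forall k, x k \in gr (d k)) -> (i < j)%N ->
  x i = x j -> d i = d j -> eps (d i) (d i) = 1 -> br x = 0.
Proof.
move=> char0 xd lt_ij.
(* Move [x j] leftwards by adjacent transpositions; once it sits next to [x i],
   skew-symmetry reads [br x = - br x]. *)
suff eq0_at_dist : forall k (x' : {ffun 'I_m -> g}) d' (j' : 'I_m),
    (forall l, x' l \in gr (d' l)) -> j' = (i + k).+1 :> nat ->
    x' i = x' j' -> d' i = d' j' -> eps (d' i) (d' i) = 1 -> br x' = 0.
  by apply: (eq0_at_dist (j - i.+1)%N x d j) => //; lia.
elim=> [|k IHk] x' d' j' x'd' j'E x'ij' d'ij' eps1.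
  rewrite addn0 in j'E.
  move: (HomLieColor_skew x'd' j'E); rewrite swap_ff_same // -d'ij' eps1 scale1r => brE.
  have : 2%:R *: br x' = 0 by rewrite scaler_nat mulr2n {1}brE addNr.
  by move/eqP; rewrite scaler_eq0 ((pcharf0P K).1 char0 2) => /= /eqP.
have lt_lm : ((i + k).+1 < m)%N by have := ltn_ord j'; lia.
pose l := Ordinal lt_lm.
have [i_neq_l i_neq_j'] : i != l /\ i != j'.
  by split; apply/eqP => /(congr1 (@nat_of_ord m)) /=; lia.
have j'_succ_l : val j' = (val l).+1 by rewrite /= j'E addnS.
rewrite (HomLieColor_skew x'd' j'_succ_l).
rewrite (IHk (swap_ff x' l j') (swap_ff d' l j') l) ?scaler0 ?oppr0 //.
- by move=> p; rewrite !ffunE; case: ifP => _; last case: ifP.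
- by rewrite swap_ff_l swap_ff_id.
- by rewrite swap_ff_l swap_ff_id.
- by rewrite swap_ff_id.
Qed.

End HomLieColorTheory.

Section InducedBracket.
Variables (K : fieldType) (Gamma : zmodType) (g : lmodType K).
Variables (eps : Gamma -> Gamma -> K) (gr : Gamma -> pred g) (alpha : g -> g).
Variables (m : nat) (br : {ffun 'I_m.+2 -> g} -> g) (a : g).
Hypotheses (char0 : char_zero K) (hlie : HomLieColor eps gr alpha br).
Hypotheses (a_deg0 : a \in gr 0) (alpha_a : alpha a = a).

Lemma br_cons_snoc_eq0 (x : {ffun 'I_m -> g}) dx :
  (forall k, x k \in gr (dx k)) ->
  br (snoc_ff (m := m.+2) (cons_ff (m := m.+1) a x) a) = 0.
Proof.
move=> xdx; rewrite snoc_cons_ff.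
have xd := cons_ff_in_gr a_deg0 (snoc_ff_in_gr a_deg0 xdx).
apply: (HomLieColor_eq0_repeat hlie (i := ord0) (j := lift ord0 ord_max) char0 xd) => //.
- by rewrite cons_ff0 cons_ff_lift snoc_ff_max.
- by rewrite /dcons unlift_none liftK /dsnoc unlift_none.
- by rewrite /dcons unlift_none (bicharacter_eps00 hlie.1).
Qed.

Lemma HomLieColor_induced : HomLieColor eps gr alpha (induced_br br a).
Proof.
case: (hlie) => bichar [alpha_deg0 br_lin br_deg _ br_fund].
split=> //; split=> // [x i | x d xd | x d i i' xd i'_succ | x dx y dy xdx ydy];
  rewrite /induced_br.
- by move=> c u v; rewrite -!fset_at_cons_ff; apply: br_lin.
- by have := br_deg _ _ (cons_ff_in_gr a_deg0 xd); rewrite big_dcons0.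
- have i'_succ_lift : lift ord0 i' = (lift ord0 i).+1 :> nat.
    by rewrite !lift0; congr _.+1; exact: i'_succ.
  rewrite (HomLieColor_skew hlie (cons_ff_in_gr a_deg0 xd) i'_succ_lift).
  by rewrite swap_ff_cons_ff /dcons !liftK.
have := br_fund (cons_ff (m := m.+1) a x) (dcons 0 dx)
  (cons_ff (m := m.+2) a y) (dcons 0 dy)
  (cons_ff_in_gr a_deg0 xdx) (cons_ff_in_gr a_deg0 ydy).
rewrite (map_cons_ff alpha) alpha_a snoc_cons_ff => ->.
have first_term0 : br [ffun k => if k == ord0
    then br (snoc_ff (m := m.+2) (cons_ff (m := m.+1) a x) a)
    else alpha (cons_ff (m := m.+2) a y k)] = 0.
  by apply: (HomLieColor_eq0 hlie (i := ord0)); rewrite ffunE eqxx (br_cons_snoc_eq0 xdx).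
rewrite big_ord_recl cons_ff0 first_term0 scaler0 add0r.
apply: eq_bigr => i _; congr (eps _ _ *: br _).
- by rewrite big_dcons0.
- by rewrite big_dcons0; apply: eq_bigl => k; rewrite !lift0.
apply: cons_ffP => [|k]; rewrite ffunE.
  by rewrite (negbTE (neq_lift _ _)) cons_ff0 alpha_a.
by rewrite (inj_eq lift_inj) !cons_ff_lift snoc_cons_ff ffunE.
Qed.

End InducedBracket.

Section DeformedBrackets.
Variables (K : fieldType) (g : lmodType K) (N : g -> g).

Definition apply_on m (S : {set 'I_m}) (x : {ffun 'I_m -> g}) : {ffun 'I_m -> g} :=
  [ffun k => if k \in S then N (x k) else x k].

Lemma br_NS m (br : {ffun 'I_m -> g} -> g) j x :
  br_N br N j.+1 x =
  \sum_(S : {set 'I_m} | #|S| == j.+1) br (apply_on S x) - N (br_N br N j x).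
Proof. by []. Qed.

Lemma br_N_top m (br : {ffun 'I_m.+1 -> g} -> g) x :
  br_N br N m.+1 x = br [ffun k => N (x k)] - N (br_N br N m x).
Proof.
rewrite br_NS (big_pred1 setT) => [|S]; last first.
  apply/eqP/eqP => [cardS | ->]; last by rewrite cardsT card_ord.
  by apply/eqP; rewrite eqEcard subsetT cardsT card_ord; lia.
by congr (br _ - _); apply/ffunP => k; rewrite !ffunE in_setT.
Qed.

Lemma apply_on_cons_ff m (S : {set 'I_m.+1}) z (x : {ffun 'I_m -> g}) :
  apply_on S (cons_ff (m := m.+1) z x) =
  cons_ff (m := m.+1) (if ord0 \in S then N z else z)
    (apply_on (lift ord0 @^-1: S) x).
Proof.
apply: cons_ffP => [|k]; rewrite ffunE; first by rewrite cons_ff0.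
by rewrite cons_ff_lift ffunE inE.
Qed.

Section CentralFirstArgument.
Variables (m : nat) (br : {ffun 'I_m.+1 -> g} -> g) (a : g).
Hypothesis Na_central : in_center br (N a).

Lemma sum_apply_on_cons_ff j (x : {ffun 'I_m -> g}) :
  \sum_(S : {set 'I_m.+1} | #|S| == j) br (apply_on S (cons_ff (m := m.+1) a x)) =
  \sum_(S : {set 'I_m} | #|S| == j) br (cons_ff (m := m.+1) a (apply_on S x)).
Proof.
rewrite (bigID (fun S : {set 'I_m.+1} => ord0 \in S)) /= big1 ?add0r;
  last by move=> S /andP[_ S0]; rewrite apply_on_cons_ff S0; apply: Na_central.
rewrite (reindex_onto (fun S' : {set 'I_m} => [set lift ord0 k | k in S'])
    (fun S : {set 'I_m.+1} => lift ord0 @^-1: S)); last first.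
  move=> S /andP[_ S0]; apply/setP => k.
  case: (unliftP ord0 k) => [k'|] ->; first by rewrite mem_imset ?inE //; apply: lift_inj.
  by rewrite (negbTE S0) (negbTE (lift0_notin_imset _)).
apply: eq_big => [S'|S' _].
  rewrite card_imset; last exact: lift_inj.
  by rewrite lift0_notin_imset preimset_lift0_imset eqxx !andbT.
by rewrite apply_on_cons_ff (negbTE (lift0_notin_imset _)) preimset_lift0_imset.
Qed.

Lemma br_N_cons_ff j (x : {ffun 'I_m -> g}) :
  br_N br N j (cons_ff (m := m.+1) a x) = br_N (induced_br br a) N j x.
Proof.
elim: j => [//|j IHj].
by rewrite !br_NS IHj sum_apply_on_cons_ff.
Qed.

End CentralFirstArgument.
End DeformedBrackets.

Lemma Nijenhuis_induced (K : fieldType) (Gamma : zmodType) (g : lmodType K)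
    (gr : Gamma -> pred g) (alpha : g -> g) m (br : {ffun 'I_m.+2 -> g} -> g)
    (N : g -> g) (a : g) :
  Nijenhuis gr alpha br N -> injective N -> in_center br (N a) ->
  Nijenhuis gr alpha (induced_br br a) N.
Proof.
case=> N_deg0 N_alpha N_br N_inj Na_central; split=> // x.
have := N_br (cons_ff (m := m.+2) a x).
rewrite (map_cons_ff N) Na_central br_N_cons_ff // -(linear_fun0 N_deg0.1).
by move=> /N_inj /esym /eqP; rewrite br_N_top subr_eq0 => /eqP.
Qed.

Theorem proposition6p4 (K : fieldType) (Gamma : zmodType) (g : lmodType K)
    (eps : Gamma -> Gamma -> K) (gr : Gamma -> pred g) (alpha : g -> g)
    (n : nat) (br : {ffun 'I_n -> g} -> g) (N : g -> g) (a : g) :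
  char_zero K ->
  grading gr ->
  (3 <= n)%N ->
  HomLieColor eps gr alpha br ->
  Nijenhuis gr alpha br N ->
  bijective N ->
  a \in gr 0 ->
  alpha a = a ->
  in_center br (N a) ->
  HomLieColor eps gr alpha (induced_br br a) /\
  Nijenhuis gr alpha (induced_br br a) N.
Proof.
move=> char0 _ n_ge3 hlie hnij /bij_inj N_inj a_deg0 alpha_a Na_central.
case: n br n_ge3 hlie hnij Na_central => [|[|m]] // br _ hlie hnij Na_central.
split; first exact: HomLieColor_induced.
exact: Nijenhuis_induced.
Qed.
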